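(* Let $X$ be a Grothendieck Banach space and let $M$ be a closed subspace of $X$ such that the quotient $X/M$ is separable. Then $M$ is a Grothendieck space.
   Context: A Banach space $Z$ is called a Grothendieck space if every $\sigma(Z^*,Z)$-convergent (i.e. weak$^*$-convergent) sequence in the dual $Z^*$ is $\sigma(Z^*,Z^{**})$-convergent (i.e. weakly convergent). *)

From HB Require Import structures.
From mathcomp Require Import all_boot all_order all_algebra.
From mathcomp Require Import all_classical all_reals all_analysis.
Set Implicit Arguments. Unset Strict Implicit. Unset Printing Implicit Defensive.
Import Order.TTheory GRing.Theory Num.Theory.
Import numFieldNormedType.Exports.
Local Open Scope classical_set_scope.
Local Open Scope ring_scope.

Section Dual.
Variables (R : realType) (Z : normedModType R).

Definition fbounded (f : Z -> R) (K : R) := forall z, `|f z| <= K * `|z|.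

Definition in_dual (f : Z -> R) : Prop :=
  (forall (a : R) (x y : Z), f (a *: x + y) = a * f x + f y) /\
  exists K : R, fbounded f K.

(* elements of the bidual Z^** : bounded linear functionals on Z^*,
   where Z^* carries the operator norm *)
Definition in_bidual (Phi : (Z -> R) -> R) : Prop :=
  (forall (a : R) (f g : Z -> R), in_dual f -> in_dual g ->
     Phi (fun z => a * f z + g z) = a * Phi f + Phi g) /\
  exists C : R, forall (f : Z -> R) (K : R),
     in_dual f -> 0 <= K -> fbounded f K -> `|Phi f| <= C * K.

Definition weakstar_cvg (F : nat -> Z -> R) (f : Z -> R) : Prop :=
  forall z, (fun n => F n z) @ \oo --> f z.

Definition weak_cvg (F : nat -> Z -> R) (f : Z -> R) : Prop :=
  forall Phi, in_bidual Phi -> (fun n => Phi (F n)) @ \oo --> Phi f.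

Definition Grothendieck : Prop :=
  forall F : nat -> Z -> R, (forall n, in_dual (F n)) ->
    (exists f, in_dual f /\ weakstar_cvg F f) ->
    exists g, in_dual g /\ weak_cvg F g.
End Dual.

(* The quotient X / J(M) is separable: some countable family D is dense in the
   quotient norm ||x + J(M)|| = inf_m ||x - J m||. *)
Definition quotient_separable (R : realType) (X M : normedModType R)
    (J : M -> X) : Prop :=
  exists D : nat -> X, forall (x : X) (e : R), 0 < e ->
    exists (n : nat) (m : M), `|x - D n - J m| < e.

From HB Require Import structures.
From mathcomp Require Import all_boot all_order all_algebra.
From mathcomp Require Import all_classical all_reals all_analysis.
From mathcomp Require Import ring lra.
Import Order.TTheory GRing.Theory Num.Theory.
Import numFieldNormedType.Exports.
Local Open Scope classical_set_scope.
Local Open Scope ring_scope.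

(* Let [F n] converge weak-star to [f] in [M^*].  By uniform boundedness the [F n]
   have a common bound [B], and by Hahn-Banach they extend along [J] to functionals
   [G n] on [X] with the same bound.  Along any subsequence, a diagonal argument makes
   [G n] converge on a countable set [D] that is dense in [X] modulo [J M]; since
   [G n] also converges on [J M], where it is [F n], equiboundedness gives pointwise
   convergence on all of [X], to an element of [X^*].  As [X] is Grothendieck, this
   further subsequence of [G n] converges weakly in [X^*]; precomposition with [J]
   turns every [Phi] in [M^**] into [K |-> Phi (K \o J)] in [X^**], so the
   corresponding [F n] converge weakly to [f].  Every subsequence of [F n] thus has a
   further subsequence converging weakly to [f], hence so does [F n] itself. *)

Lemma increasing_seq_geq (phi : nat -> nat) : increasing_seq phi -> forall n, (n <= phi n)%N.
Proof.
move=> /increasing_seqP phi_incr; elim=> [//|n IHn].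
exact: leq_ltn_trans IHn (phi_incr n).
Qed.

Lemma increasing_seq_cvgn (phi : nat -> nat) : increasing_seq phi -> phi @ \oo --> \oo.
Proof.
move=> /increasing_seq_geq phi_geq; apply/cvgnyPge => N.
by near=> n; apply: leq_trans (phi_geq n); near: n; apply: nbhs_infty_ge.
Unshelve. all: by end_near. Qed.

Section subsequences.
Context {T : topologicalType}.

Lemma cvg_subseq (u : nat -> T) (phi : nat -> nat) (l : T) :
  increasing_seq phi -> u @ \oo --> l -> (u \o phi) @ \oo --> l.
Proof. by move=> /increasing_seq_cvgn; apply: cvg_comp. Qed.

Lemma cvg_subsubseq (u : nat -> T) (l : T) :
  (forall phi, increasing_seq phi ->
     exists2 psi, increasing_seq psi & (u \o phi \o psi) @ \oo --> l) ->
  u @ \oo --> l.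
Proof.
move=> subsub; apply: contrapT => /existsNP[U /not_implyP[Ul Uoften]].
have escape N : {n | (N < n)%N /\ ~ U (u n)}.
  apply: cid; apply: contrapT => never; apply: Uoften.
  exists N.+1 => // n /= Nn; apply: contrapT => nU; apply: never; by exists n.
have [f [_ f_escape]] := dependent_choice escape 0%N.
have /subsub[psi _] : increasing_seq (f \o S).
  by apply/increasing_seqP => n; exact: (f_escape n.+1).1.
move=> /(_ U Ul)[N _ /(_ N (leqnn N))].
exact: (f_escape (psi N)).2.
Qed.
End subsequences.

Section diagonal_extraction.
Variables (R : realType) (a : nat -> nat -> R).
Hypothesis a_bounded : forall k, exists B, forall n, `|a n k| <= B.

Let extract (sigma : nat -> nat) (k : nat) :
  {phi : nat -> nat | increasing_seq phi & cvgn (fun n => a (sigma (phi n)) k)}.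
Proof.
apply: cid2; have [B aB] := a_bounded k.
apply: (@bolzano_weierstrass _ (fun n => a (sigma n) k)).
exists B; split; first exact: num_real.
by move=> C BC n _; apply: le_trans (aB _) (ltW BC).
Qed.

Let nest : nat -> nat -> nat := fix nest k :=
  if k is k'.+1 then nest k' \o sval (extract (nest k') k) else sval (extract id 0).

Let nest_incr k : increasing_seq (nest k).
Proof.
elim: k => [|k IHk] /=; first by case: extract.
by case: extract => phi phi_incr _ m n /=; rewrite IHk; exact: phi_incr.
Qed.

Let nest_cvg k : cvgn (fun n => a (nest k n) k).
Proof. by case: k => [|k] /=; case: extract. Qed.

Let nest_refines k j : (k <= j)%N ->
  exists2 tau, increasing_seq tau & nest j = nest k \o tau.
Proof.
elim: j => [|j IHj]; first by rewrite leqn0 => /eqP ->; exists id.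
rewrite leq_eqVlt => /predU1P[-> | /IHj[tau tau_incr E]]; first by exists id.
rewrite /=; case: (extract (nest j) j.+1) => phi phi_incr _ /=; rewrite E.
exists (tau \o phi) => // m n /=.
by rewrite tau_incr; exact: phi_incr.
Qed.

Lemma diagonal_extraction :
  exists2 psi, increasing_seq psi & forall k, cvgn (fun j => a (psi j) k).
Proof.
exists (fun j => nest j j).
  apply/increasing_seqP => j; have [tau tau_incr ->] := nest_refines _ _ (leqnSn j).
  by rewrite /= (leW_mono (nest_incr j)); exact: increasing_seq_geq.
move=> k.
(* From index [k] on, the diagonal is a subsequence of [nest k]. *)
have /choice[T T_spec] : forall j, exists t, (k <= j)%N -> (j <= t)%N /\ nest j j = nest k t.
  move=> j; have [kj|_] := leqP k j; last by exists 0%N.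
  have [tau tau_incr E] := nest_refines _ _ kj; exists (tau j) => _.
  by rewrite E; split; first exact: increasing_seq_geq.
have T_cvg : T @ \oo --> \oo.
  apply/cvgnyPge => N; near=> j.
  have kj : (k <= j)%N by near: j; apply: nbhs_infty_ge.
  have [jT _] := T_spec j kj.
  by apply: leq_trans jT; near: j; apply: nbhs_infty_ge.
have /cvg_ex[l nest_l] := nest_cvg k.
apply/cvg_ex; exists l; apply: cvg_trans (cvg_comp _ _ T_cvg nest_l).
apply: near_eq_cvg; near=> j.
have kj : (k <= j)%N by near: j; apply: nbhs_infty_ge.
by have [_ /= ->] := T_spec j kj.
Unshelve. all: by end_near. Qed.
End diagonal_extraction.

Definition pack_linear {R : pzRingType} {U : lmodType R} {h : U -> R^o} (h_lin : linear h) :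
  {linear U -> R^o} := HB.pack h (GRing.isLinear.Build _ _ _ _ h h_lin).

Section hahn_banach.
Variables (R : realType) (V W : lmodType R) (J : {linear W -> V}) (p : V -> R).
Hypothesis p_subadd : forall x y, p (x + y) <= p x + p y.
Hypothesis p_scale : forall t x, 0 <= t -> p (t *: x) = t * p x.

Definition dominated_linear_graph (G : set (V * R)) :=
  [/\ forall x r s, G (x, r) -> G (x, s) -> r = s,
      forall a x y r s, G (x, r) -> G (y, s) -> G (a *: x + y, a * r + s) &
      forall x r, G (x, r) -> r <= p x].

Section one_step_extension.
Variables (G : set (V * R)) (x : V).
Hypotheses (G_dom : dominated_linear_graph G) (G00 : G (0, 0)).

Let G_scale t [y s] : G (y, s) -> G (t *: y, t * s).
Proof. by case: G_dom => _ G_lin _ /(G_lin t _ _ _ _)/(_ G00); rewrite !addr0. Qed.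

Let G_add [y s y' s'] : G (y, s) -> G (y', s') -> G (y + y', s + s').
Proof. by case: G_dom => _ G_lin _ Gy /(G_lin 1 _ _ _ _ Gy); rewrite scale1r mul1r. Qed.

Let G_le [y s] : G (y, s) -> s <= p y.
Proof. by case: G_dom => _ _; apply. Qed.

(* [s + s' <= p (y + y') <= p (y + x) + p (y' - x)] *)
Let gap [y s y' s'] : G (y, s) -> G (y', s') -> s' - p (y' - x) <= p (y + x) - s.
Proof.
move=> Gy Gy'; have := G_le (G_add Gy Gy').
have := p_subadd (y + x) (y' - x); rewrite addrACA subrr addr0; lra.
Qed.

Let lower := [set q.2 - p (q.1 - x) | q in G].

(* Any [c] between [lower] and the bounds of [gap] is a dominated value at [x]. *)
Let c := sup lower.

Let lower_has_sup : has_sup lower.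
Proof.
split; first by exists (0 - p (0 - x)), (0, 0).
by exists (p (0 + x) - 0) => _ [[y s] Gy <-]; exact: gap.
Qed.

Let c_ge [y s] : G (y, s) -> s - p (y - x) <= c.
Proof. by move=> Gy; apply: sup_upper_bound => //; exists (y, s). Qed.

Let c_le [y s] : G (y, s) -> c <= p (y + x) - s.
Proof. by move=> Gy; apply: ge_sup => [|_ [[y' s'] Gy' <-]]; [case: lower_has_sup|exact: gap]. Qed.

Lemma dominated_linear_graph_extend :
  exists2 G', dominated_linear_graph G' & G `<=` G' /\ exists r, G' (x, r).
Proof.
have [[r Gxr]|nx] := pselect (exists r, G (x, r)); first by exists G => //; split=> //; exists r.
exists [set z | exists y s t, G (y, s) /\ z = (y + t *: x, s + t * c)]; last first.
  split; first by move=> [y s] Gy; exists y, s, 0; rewrite scale0r mul0r !addr0.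
  by exists c, 0, 0, 1; rewrite scale1r mul1r !add0r.
case: G_dom => G_fun G_lin _; split.
- move=> z r r' [y [s [t [Gy [-> ->]]]]] [y' [s' [t' [Gy' [E ->]]]]].
  have [tt'|tt'] := eqVneq t t'.
    by move: E Gy'; rewrite -tt' => /addIr <- /(G_fun _ _ _ Gy) ->.
  have Ex : x = (t - t')^-1 *: (y' - y).
    rewrite -[y'](addrK (t' *: x)) -E addrAC [y + _]addrC addrK -scalerBl.
    by rewrite scalerA mulVf ?scale1r ?subr_eq0.
  case: nx; exists ((t - t')^-1 * (s' - s)); rewrite Ex; apply: G_scale.
  by have := G_add Gy' (G_scale (-1) Gy); rewrite scaleN1r mulN1r.
- move=> a _ _ _ _ [y [s [t [Gy [-> ->]]]]] [y' [s' [t' [Gy' [-> ->]]]]].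
  exists (a *: y + y'), (a * s + s'), (a * t + t'); split; first exact: G_lin.
  by congr pair; [rewrite scalerDr scalerDl scalerA addrACA|ring].
- move=> _ _ [y [s [t [Gy [-> ->]]]]].
  have [t_lt0|t_gt0|->] := ltgtP t 0; last by rewrite scale0r mul0r !addr0; exact: G_le.
  + have u_gt0 : 0 < - t by rewrite oppr_gt0.
    have := ler_wpM2l (ltW u_gt0) (c_ge (G_scale (- t)^-1 Gy)).
    have -> : y + t *: x = - t *: ((- t)^-1 *: y - x).
      by rewrite scalerBr scalerA mulfV ?gt_eqF // scale1r scaleNr opprK.
    rewrite p_scale ?(ltW u_gt0) // mulrBr mulrA mulfV ?gt_eqF // mul1r; lra.
  + have := ler_wpM2l (ltW t_gt0) (c_le (G_scale t^-1 Gy)).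
    have -> : y + t *: x = t *: (t^-1 *: y + x).
      by rewrite scalerDr scalerA mulfV ?gt_eqF // scale1r.
    rewrite p_scale ?(ltW t_gt0) // mulrBr mulrA mulfV ?gt_eqF // mul1r; lra.
Qed.
End one_step_extension.

Lemma dominated_linear_graph_bigcup (K : set (set (V * R))) :
  K `<=` dominated_linear_graph -> total_on K subset ->
  dominated_linear_graph (\bigcup_(H in K) H).
Proof.
move=> K_dom K_tot.
have common q q' : (\bigcup_(H in K) H) q -> (\bigcup_(H in K) H) q' ->
    exists2 H, K H & H q /\ H q'.
  move=> [H KH Hq] [H' KH' H'q']; have [HH'|H'H] := K_tot _ _ KH KH'.
    by exists H' => //; split=> //; apply: HH'.
  by exists H => //; split=> //; apply: H'H.
split.
- move=> x r s Ur Us; have [H /K_dom[H_fun _ _] [Hr Hs]] := common _ _ Ur Us.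
  exact: H_fun Hr Hs.
- move=> a x y r s Ur Us; have [H KH [Hr Hs]] := common _ _ Ur Us.
  by case: (K_dom _ KH) => _ H_lin _; exists H => //; apply: H_lin.
- by move=> x r [H /K_dom[_ _ H_le] Hr]; apply: H_le.
Qed.

Lemma dominated_linear_graph_bigcupU [G0 : set (V * R)] :
  dominated_linear_graph G0 -> forall F : set (set (V * R)),
  F `<=` (fun A => dominated_linear_graph (G0 `|` A)) -> total_on F subset ->
  dominated_linear_graph (G0 `|` \bigcup_(A in F) A).
Proof.
move=> G0_dom F F_dom F_tot.
have -> : G0 `|` \bigcup_(A in F) A = \bigcup_(H in [set G0] `|` [set G0 `|` A | A in F]) H.
  apply/seteqP; split=> [q [G0q|[A FA Aq]]|q [H [->|[A FA <-]] Hq]].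
  - by exists G0 => //; left.
  - by exists (G0 `|` A); [right; exists A | right].
  - by left.
  - by case: Hq => [G0q|Aq]; [left|right; exists A].
apply: dominated_linear_graph_bigcup => [H [->|[A /F_dom ? <-]]//|H H'].
move=> [->|[A FA <-]] [->|[A' FA' <-]];
  [by left|by left; apply: subsetUl|by right; apply: subsetUl|].
by have [AA'|A'A] := F_tot _ _ FA FA'; [left|right]; apply: setUS.
Qed.

Lemma dominated_linear_graph_range [f : W -> R^o] :
  linear f -> (forall w, f w <= p (J w)) ->
  dominated_linear_graph (range (fun w => (J w, f w))).
Proof.
move=> f_lin f_dom; have fB u v : f (u - v) = f u - f v := linearB (pack_linear f_lin) u v.
have p0 : p 0 = 0 by rewrite -(scale0r (0 : V)) p_scale // mul0r.
split.
- move=> _ r s [w _ [<- <-]] [w' _ [Jw' <-]]; apply/eqP; rewrite eq_le.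
  have := f_dom (w - w'); have := f_dom (w' - w).
  by rewrite !fB !linearB /= Jw' subrr p0 !subr_le0 => -> ->.
- move=> a _ _ _ _ [w _ [<- <-]] [w' _ [<- <-]].
  by exists (a *: w + w') => //; rewrite linearP f_lin.
- by move=> _ _ [w _ [<- <-]].
Qed.

Lemma hahn_banach (f : W -> R^o) : linear f -> (forall w, f w <= p (J w)) ->
  exists g : {linear V -> R^o}, (forall x, g x <= p x) /\ forall w, g (J w) = f w.
Proof.
move=> f_lin f_dom; pose G0 := range (fun w => (J w, f w)).
(* [Zorn_bigcup] also covers the empty chain, hence the graphs are taken on top of [G0]. *)
have [A [A_dom A_max]] := Zorn_bigcup (dominated_linear_graph_bigcupU
  (dominated_linear_graph_range f_lin f_dom)).
set G := G0 `|` A in A_dom.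
have f0 : f 0 = 0 := linear0 (pack_linear f_lin).
have G00 : G (0, 0) by left; exists 0 => //; rewrite linear0 f0.
have G_total x : exists r, G (x, r).
  apply: contrapT => nx.
  have [G' G'_dom [GG' [r G'x]]] := dominated_linear_graph_extend _ x A_dom G00.
  apply: (A_max G'); last by rewrite (setUidr (subset_trans (@subsetUl _ _ A) GG')).
  split; first by apply: subset_trans GG'; apply: subsetUr.
  by move=> G'A; apply: nx; exists r; right; apply: G'A.
have /choice[g Gg] := G_total.
case: A_dom => G_fun G_lin G_le.
have g_lin : linear (g : V -> R^o).
  by move=> a x y; apply: G_fun (Gg _) _; apply: G_lin (Gg _) (Gg _).
exists (pack_linear g_lin); split=> [x|w]; first exact: G_le (Gg x).
by apply: G_fun (Gg _) _; left; exists w.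
Qed.
End hahn_banach.

Lemma hahn_banach_norm (R : realType) (V W : normedModType R) (J : {linear W -> V})
    (f : W -> R^o) (K : R) :
  linear f -> 0 <= K -> (forall w, `|f w| <= K * `|J w|) ->
  exists g : {linear V -> R^o}, fbounded g K /\ forall w, g (J w) = f w.
Proof.
move=> f_lin K_ge0 fK.
have [x y|t x t_ge0|w|g [gK gJ]] := @hahn_banach R V W J (fun x => K * `|x|) _ _ f f_lin _.
- by rewrite -mulrDr ler_wpM2l ?ler_normD.
- by rewrite normrZ ger0_norm // mulrCA.
- exact: le_trans (ler_norm _) (fK w).
exists g; split=> // x; rewrite ler_norml gK andbT lerNl -linearN.
by rewrite -[`|x|]normrN gK.
Qed.

Section dual_space.
Context {R : realType} {Z : normedModType R}.

Lemma in_bidual_eval (z : Z) : in_bidual (fun K : Z -> R => K z).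
Proof. by split=> //; exists `|z| => K C _ _ KC; rewrite mulrC. Qed.

Lemma weak_cvg_weakstar [F : nat -> Z -> R] [g : Z -> R] : weak_cvg F g -> weakstar_cvg F g.
Proof. by move=> Fg z; apply: Fg (in_bidual_eval z). Qed.

Lemma linear_in_dual [G : {linear Z -> R^o}] [B : R] : fbounded G B -> in_dual G.
Proof. by split; [exact: linearP | exists B]. Qed.

Lemma fbounded_of_unit_ball (G : {linear Z -> R^o}) (B : R) :
  (forall z, `|z| <= 1 -> `|G z| <= B) -> fbounded G B.
Proof.
move=> GB z; have [->|z_neq0] := eqVneq z 0; first by rewrite linear0 !normr0 mulr0.
have z_gt0 : 0 < `|z| by rewrite normr_gt0.
have := GB (`|z|^-1 *: z); rewrite normrZ normrV ?unitfE ?gt_eqF // normr_id mulVf ?gt_eqF //.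
by rewrite linearZ normrZ normrV ?unitfE ?gt_eqF // normr_id ler_pdivrMl // mulrC => ->.
Qed.

Lemma equibounded_cvgn_closed [G : nat -> {linear Z -> R^o}] [B : R] (x : Z) :
  0 <= B -> (forall n, fbounded (G n) B) ->
  (forall e, 0 < e -> exists2 y, cvgn (fun n => G n y) & `|x - y| < e) ->
  cvgn (fun n => G n x).
Proof.
move=> B_ge0 GB x_approx; apply/cauchy_cvgP/cauchy_exP => e e_gt0.
have B1_gt0 : 0 < B + 1 by rewrite ltr_wpDl.
have [|y /cvg_ex[l Gyl] xy] := x_approx (e / 2 / (B + 1)); first by rewrite !divr_gt0.
have Bxy : B * `|x - y| <= e / 2.
  rewrite -[e / 2](divfK (lt0r_neq0 B1_gt0)) mulrC.
  by apply: ler_pM => //; [exact: ltW | rewrite lerDl].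
exists l; suff : \forall n \near \oo, `|l - G n x| < e.
  by apply: filterS => n; rewrite -ball_normE.
near=> n.
have Gny : `|l - G n y| < e / 2 by near: n; move/cvgrPdist_lt: Gyl; apply; rewrite divr_gt0.
have Gnxy : `|G n y - G n x| <= B * `|x - y|.
  by rewrite -linearB distrC; apply: GB.
have := ler_distD (G n y) l (G n x); lra.
Unshelve. all: by end_near. Qed.

Lemma pointwise_limit_in_dual [G : nat -> {linear Z -> R^o}] [B : R] [g : Z -> R] :
  (forall n, fbounded (G n) B) -> (forall z, G n z @[n --> \oo] --> g z) -> in_dual g.
Proof.
move=> GB Gg; split=> [a z y|]; last first.
  exists B => z; apply: ler_cvg_to (cvg_norm (Gg z)) (cvg_cst _) _.
  by apply: nearW => n; apply: GB.
have Gzy : G n (a *: z + y) @[n --> \oo] --> a * g z + g y.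
  under eq_fun do rewrite linearP.
  exact: cvgD (cvgZ (cvg_cst a) (Gg z)) (Gg y).
exact: cvg_unique (Gg _) Gzy.
Qed.
End dual_space.

Lemma weakstar_cvg_bounded {R : realType} {Z : completeNormedModType R}
    {F : nat -> Z -> R} {f : Z -> R} :
  (forall n, in_dual (F n)) -> weakstar_cvg F f ->
  exists2 B, 0 <= B & forall n, fbounded (F n) B.
Proof.
move=> F_dual Ff; have F_lin n : linear (F n : Z -> R^o) by case: (F_dual n).
have [||B FB] := @Banach_Steinhauss R Z R^o (range F) _ _ 1.
- move=> _ [n _ <-]; split; last exact: F_lin.
  case: (F_dual n) => _ [K FK] r; exists (`|K| * `|r|) => z zr.
  apply: le_trans (FK z) (le_trans (ler_wpM2r (normr_ge0 z) (ler_norm K)) _).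
  by apply: ler_wpM2l => //; apply: le_trans zr (ler_norm r).
- move=> z; have /cvg_seq_bounded[M [_ FM]] : cvgn (fun n => F n z).
    by apply/cvg_ex; exists (f z); apply: Ff.
  by exists (M + 1) => _ [n _ <-]; apply: FM => //; rewrite ltrDl.
exists B => [|n].
  have F00 : F 0%N 0 = 0 := linear0 (pack_linear (F_lin 0%N)).
  by have := FB _ (ex_intro2 _ _ 0%N I erefl) 0; rewrite normr0 ler01 F00 normr0 => ->.
by apply: (@fbounded_of_unit_ball _ _ (pack_linear (F_lin n))) => z; apply: FB.
Qed.

Section restriction.
Context {R : realType} {X M : normedModType R} {J : {linear M -> X}}.
Hypothesis J_isometry : forall m, `|J m| = `|m|.

Lemma fbounded_comp (K : X -> R) (C : R) : fbounded K C -> fbounded (K \o J) C.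
Proof. by move=> KC m; rewrite -J_isometry; apply: KC. Qed.

Lemma in_dual_comp (K : X -> R) : in_dual K -> in_dual (K \o J).
Proof.
case=> K_lin [C KC]; split; last by exists C; apply: fbounded_comp.
by move=> a x y /=; rewrite linearP K_lin.
Qed.

Lemma in_bidual_comp [Phi : (M -> R) -> R] : in_bidual Phi -> in_bidual (fun K => Phi (K \o J)).
Proof.
case=> Phi_lin [C PhiC]; split=> [a K K' /in_dual_comp K_dual /in_dual_comp K'_dual|].
  exact: Phi_lin.
exists C => K C' /in_dual_comp K_dual C'_ge0 /fbounded_comp; exact: PhiC.
Qed.

End restriction.

Lemma weakstar_cvg_has_weak_subseq {R : realType} {X M : completeNormedModType R}
    {J : {linear M -> X}} (J_isometry : forall m, `|J m| = `|m|)
    {F : nat -> M -> R} {f : M -> R} :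
  Grothendieck X -> quotient_separable J ->
  (forall n, in_dual (F n)) -> weakstar_cvg F f ->
  exists2 psi, increasing_seq psi & weak_cvg (F \o psi) f.
Proof.
move=> GX [D D_dense] F_dual Ff.
have [B B_ge0 FB] := weakstar_cvg_bounded F_dual Ff.
have /choice[G GF] n : exists G : {linear X -> R^o}, fbounded G B /\ forall m, G (J m) = F n m.
  apply: (@hahn_banach_norm _ _ _ J (F n) B) => //; first by case: (F_dual n).
  by move=> m; rewrite J_isometry; apply: FB.
have [k|psi psi_incr GD] := @diagonal_extraction R (fun n k => G n (D k)).
  by exists (B * `|D k|) => n; apply: (GF n).1.
pose H j := G (psi j).
have H_cvg x : cvgn (fun j => H j x).
  apply: (equibounded_cvgn_closed x B_ge0) => [j|e e_gt0]; first exact: (GF _).1.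
  have [k [m xDJ]] := D_dense x e e_gt0; exists (D k + J m); last by rewrite opprD addrA.
  under eq_fun do rewrite linearD (GF _).2.
  apply: is_cvgD; first exact: GD.
  by apply/cvg_ex; exists (f m); apply: cvg_subseq psi_incr (Ff m).
have H_dual j : in_dual (H j) by apply: linear_in_dual (GF _).1.
have g_dual := pointwise_limit_in_dual (fun j => (GF _).1) H_cvg.
have [h [_ Hh]] := GX H H_dual (ex_intro _ _ (conj g_dual H_cvg)).
have hJ : h \o J = f.
  apply/funext => m; apply: (cvg_unique (@Rhausdorff R) (weak_cvg_weakstar Hh (J m))).
  rewrite /=; under eq_fun do rewrite (GF _).2.
  exact: cvg_subseq psi_incr (Ff m).
exists psi => // Phi Phi_bidual; rewrite -hJ.
suff -> : (fun j => Phi ((F \o psi) j)) = (fun j => Phi (H j \o J)).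
  exact: Hh _ (in_bidual_comp J_isometry Phi_bidual).
by apply/funext => j; congr Phi; apply/funext => m; rewrite /= (GF _).2.
Qed.

Theorem proposition3p1 (R : realType) (X M : completeNormedModType R)
    (J : {linear M -> X}) (J_isometry : forall m : M, `|J m| = `|m|) :
  Grothendieck X -> quotient_separable J -> Grothendieck M.
Proof.
move=> GX sepQ F F_dual [f [f_dual Ff]]; exists f; split=> // Phi Phi_bidual.
apply: cvg_subsubseq => phi phi_incr.
have [|psi psi_incr Fw] := weakstar_cvg_has_weak_subseq (F := F \o phi) (f := f)
  J_isometry GX sepQ (fun n => F_dual (phi n)).
  by move=> m; apply: cvg_subseq phi_incr (Ff m).
by exists psi => //; apply: Fw.
Qed.
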